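(* Let $n\ge0$ and $k,m\ge1$ be integers, and let $r_0<r_1<\dots<r_{k-1}$ and $s_0<s_1<\dots<s_{k-1}$ be integers in $\{1,\dots,k+m\}$. Let $\bar r_0<\dots<\bar r_{m-1}$ and $\bar s_0<\dots<\bar s_{m-1}$ be the elements of $\{1,\dots,k+m\}\setminus\{r_0,\dots,r_{k-1}\}$ and $\{1,\dots,k+m\}\setminus\{s_0,\dots,s_{k-1}\}$ respectively. Then $$\det\Big(C_{2n}^{(2k+2m-1)}(2r_i-2\to2s_j-2)\Big)_{0\le i,j\le k-1}=(-1)^{\sum_{i=0}^{m-1}(\bar r_i+\bar s_i)}\det\Big(C_{-2n}^{(2k+2m-1)}(2\bar r_i-2\to2\bar s_j-2)\Big)_{0\le i,j\le m-1}.$$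
   Context: For $N\ge0$ and $0\le r,s\le K$, $C_N^{(K)}(r\to s)$ is the number of lattice paths with steps $(1,1),(1,-1)$ from $(0,r)$ to $(N,s)$ never below the $x$-axis nor above $y=K$. For odd $K$, $F(x)=\sum_{N\ge0}C_N^{(K)}(r\to s)x^N$ is a rational function $p/q$ with $\deg p<\deg q$, $q(0)\ne0$, and for negative $N$ one defines $C_N^{(K)}(r\to s)$ by $\sum_{N\ge1}C_{-N}^{(K)}(r\to s)x^N=-F(1/x)$ (equivalently by running the linear recurrence backwards). *)

From HB Require Import structures.
From mathcomp Require Import all_boot all_order all_algebra.
Set Implicit Arguments. Unset Strict Implicit. Unset Printing Implicit Defensive.
Import Order.TTheory GRing.Theory Num.Theory.
Local Open Scope ring_scope.

(* Lattice paths with steps (1,1),(1,-1) from (0,r) to (N,s) staying in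
   0 <= y <= K: the sequence of heights y_0, ..., y_N, each in 'I_K.+1,
   with consecutive heights differing by exactly 1. *)
Definition lattice_paths (K N r s : nat) : {set (N.+1).-tuple 'I_K.+1} :=
  [set t : (N.+1).-tuple 'I_K.+1 |
     [&& nth 0%N (map val t) 0 == r,
         nth 0%N (map val t) N == s &
         sorted (fun a b : 'I_K.+1 =>
                   ((val a).+1 == val b) || ((val b).+1 == val a)) t]].

Definition Cpos (K N r s : nat) : nat := #|lattice_paths K N r s|.

(* coefficient i of the reversal x^d p(1/x) of p (zero beyond d) *)
Definition revc (p : {poly rat}) (d i : nat) : rat :=
  if (i <= d)%N then p`_(d - i) else 0.

(* [neg_ext K r s D] : D N = C_{-N}^{(K)}(r -> s) for N >= 1, i.e.
   sum_{N>=1} D N x^N = -F(1/x), where F = p/q is the generating function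
   sum_{N>=0} C_N x^N with deg p < deg q and q(0) <> 0.  With d = deg q,
   -F(1/x) = -P(x)/Q(x) where Q = x^d q(1/x), P = x^d p(1/x), Q(0) <> 0;
   the identity is stated coefficientwise as Q * G = -P, G = sum_{N>=1} D N x^N. *)
Definition neg_ext (K r s : nat) (D : nat -> rat) : Prop :=
  exists p q : {poly rat},
    [/\ q`_0 != 0, (size p < size q)%N,
        (forall N : nat,
            \sum_(i < N.+1) q`_i * (Cpos K (N - i) r s)%:R = p`_N) &
        (forall N : nat,
            \sum_(i < N.+1) revc q (size q).-1 i *
                 (if (N - i)%N is 0 then 0 else D (N - i)%N)
            = - revc p (size q).-1 N)].

(* The two-sided sequence C_N^{(K)}(r -> s), N : int, given the values D
   for negative indices (D N stands for C_{-N}). *)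
Definition Cz (K : nat) (D : nat -> nat -> nat -> rat) (N : int) (r s : nat)
  : rat :=
  match N with
  | Posz n => (Cpos K n r s)%:R
  | Negz n => D r s n.+1
  end.

(* 1. Transfer matrix: C_N^{(K)}(a -> b) is the (a, b) entry of A^N, where A
      is the adjacency matrix of the path graph 0 - 1 - ... - K.
   2. Parity: A is bipartite, so for K = 2L+1 the matrix A^2 is block
      diagonal for the decomposition into even and odd heights.  Its even
      block E = B B^T (B bidiagonal with unit diagonal) is symmetric with
      det E = 1; in particular A is invertible, and the entries of A^2n and
      A^-2n between even heights are those of E^n and E^-n.
   3. Negative indices: the reversed denominator Q of the generating function
      satisfies Q(A) (A^t)_{ab} = 0 for all t, hence also for negative t
      (A^-1 is a polynomial in A), and this identifies C_{-N} = (A^-N)_{ab}.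
   4. Jacobi's complementary minor theorem, applied to E^n E^-n = 1 with the
      rows and columns chosen by two shuffle permutations; the sign of a
      shuffle is the parity of its displacement, which yields the sign
      (-1)^(sum rb_i + sb_i). *)

From HB Require Import structures.
From mathcomp Require Import all_boot all_order all_algebra.
From mathcomp Require Import perm zify.
Import Order.TTheory GRing.Theory Num.Theory.
Local Open Scope ring_scope.

Definition adjn (a b : nat) : bool := (a.+1 == b) || (b.+1 == a).

Lemma adjnC (a b : nat) : adjn a b = adjn b a.
Proof. by rewrite /adjn orbC. Qed.

Lemma adjn_par (a b : nat) : (a %% 2 = b %% 2)%N -> adjn a b = false.
Proof. move=> h; apply/negbTE/norP; split; apply/eqP; lia. Qed.

Definition Amx (K : nat) : 'M[rat]_K.+1 := \matrix_(i, j) (adjn i j)%:R.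

Definition is_path (K N a b : nat) (t : N.+1.-tuple 'I_K.+1) : bool :=
  [&& nth 0%N (map val t) 0 == a, nth 0%N (map val t) N == b &
      sorted (fun u v : 'I_K.+1 => adjn u v) t].

Lemma Cpos_sum (K N a b : nat) :
  (Cpos K N a b)%:R = \sum_t (is_path K N a b t)%:R :> rat.
Proof.
rewrite /Cpos /lattice_paths -sum1_card natr_sum big_mkcond /=.
apply: eq_bigr => t _.
by rewrite (_ : t \in _ = is_path K N a b t) ?inE //; case: is_path.
Qed.

Lemma sum_cons_tuple (T : finType) (N : nat) (F : N.+2.-tuple T -> rat) :
  \sum_t F t = \sum_z \sum_(t : N.+1.-tuple T) F (cons_tuple z t).
Proof.
rewrite pair_big /=.
apply: (reindex (fun u : T * N.+1.-tuple T => cons_tuple u.1 u.2)).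
exists (fun t => (thead t, behead_tuple t)).
- by move=> [z t] _ /=; congr pair; apply: val_inj.
- by move=> t _; case: t / tupleP => z t; apply: val_inj.
Qed.

Lemma sum_tuple1 (T : finType) (F : 1.-tuple T -> rat) :
  \sum_t F t = \sum_z F [tuple z].
Proof.
apply: (reindex (fun z : T => [tuple z])); exists (fun t => thead t) => //.
by move=> t _; case: t / tupleP => z t; rewrite tuple0; apply: val_inj.
Qed.

Lemma is_path0 (K : nat) (a b z : 'I_K.+1) :
  is_path K 0 a b [tuple z] = (z == a) && (a == b).
Proof.
rewrite /is_path /= andbT -!val_eqE /=.
by case: eqP => [->|].
Qed.

Lemma is_path_cons (K N a b : nat) (z : 'I_K.+1) (t : N.+1.-tuple 'I_K.+1) :
  is_path K N.+1 a b (cons_tuple z t) =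
  [&& val z == a, adjn z (thead t) & is_path K N (thead t) b t].
Proof.
case: t / tupleP => w t; rewrite /is_path /= eqxx /=.
by case: (_ == a) => //=; case: adjn; rewrite ?andbF.
Qed.

Lemma is_path_head (K N b : nat) (w : 'I_K.+1) (t : N.+1.-tuple 'I_K.+1) :
  is_path K N w b t = (thead t == w) && is_path K N (thead t) b t.
Proof.
case: t / tupleP => z t; rewrite /is_path /= -val_eqE /=.
by case: (z =P w) => [->|]; rewrite ?eqxx.
Qed.

Lemma Cpos_Amx (K N : nat) (a b : 'I_K.+1) :
  (Cpos K N a b)%:R = (Amx K ^+ N) a b.
Proof.
elim: N a => [|N IH] a.
  rewrite Cpos_sum sum_tuple1 expr0 mxE (bigD1 a) //= big1 => [|z /negbTE za].
    by rewrite is_path0 eqxx addr0 /=; case: (a == b).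
  by rewrite is_path0 za.
rewrite Cpos_sum sum_cons_tuple exprS mxE exchange_big /=.
transitivity (\sum_(t : N.+1.-tuple 'I_K.+1)
                 Amx K a (thead t) * (is_path K N (thead t) b t)%:R).
  apply: eq_bigr => t _; rewrite (bigD1 a) //= big1 => [|z za].
    by rewrite is_path_cons eqxx addr0 mxE; case: adjn; case: is_path.
  by rewrite is_path_cons val_eqE (negbTE za).
under [RHS]eq_bigr => w _ do rewrite -IH Cpos_sum mulr_sumr.
rewrite exchange_big /=; apply: eq_bigr => t _.
rewrite (bigD1 (thead t)) //= big1 ?addr0 // => w wt.
by rewrite is_path_head eq_sym (negbTE wt) mulr0.
Qed.

Lemma sum_nat_parity (L : nat) (G : nat -> rat) :
  \sum_(i < 2 * L) G i = \sum_(c < L) G (2 * c)%N + \sum_(c < L) G (2 * c + 1)%N.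
Proof.
elim: L => [|L IH]; first by rewrite !big_ord0 addr0.
rewrite (_ : (2 * L.+1 = (2 * L).+2)%N); last by lia.
rewrite !big_ord_recr /= IH (_ : ((2 * L).+1 = 2 * L + 1)%N); last by lia.
by rewrite -!addrA; congr (_ + _); rewrite addrCA.
Qed.

Lemma sum_ord_parity (K L : nat) (F : 'I_K.+1 -> rat) : K.+1 = (2 * L)%N ->
  \sum_z F z = \sum_(c < L) F (inord (2 * c)) + \sum_(c < L) F (inord (2 * c + 1)).
Proof.
move=> hKL; rewrite (eq_bigr (fun z : 'I_K.+1 => F (inord z))) => [|z _]; last first.
  by rewrite inord_val.
have split_len n (G : nat -> rat) : n = (2 * L)%N ->
    \sum_(i < n) G i = \sum_(c < L) G (2 * c)%N + \sum_(c < L) G (2 * c + 1)%N.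
  by move=> ->; exact: sum_nat_parity.
exact: (split_len K.+1 (fun i => F (inord i))).
Qed.

(* The block of [Amx] from the even heights 2i to the odd heights 2j+1:
   a lower bidiagonal matrix with ones on its diagonal. *)
Definition Bmx (L : nat) : 'M[rat]_L := \matrix_(i, j) (adjn (2 * i) (2 * j + 1))%:R.

Lemma det_Bmx (L : nat) : \det (Bmx L) = 1.
Proof.
rewrite det_trig.
  by rewrite big1 // => i _; rewrite mxE /adjn (_ : ((2 * i).+1 == 2 * i + 1)%N) //; apply/eqP; lia.
apply/is_trig_mxP => i j ij; rewrite mxE.
by rewrite (_ : adjn _ _ = false) //; apply/negbTE/norP; split; apply/eqP; lia.
Qed.

(* The even-even and odd-odd blocks of the square of [Amx]; both are
   unimodular, and the first one is symmetric. *)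
Definition Ev (L : nat) : 'M[rat]_L := Bmx L *m (Bmx L)^T.
Definition Od (L : nat) : 'M[rat]_L := (Bmx L)^T *m Bmx L.

Lemma det_Ev (L : nat) : \det (Ev L) = 1.
Proof. by rewrite det_mulmx det_tr det_Bmx mulr1. Qed.

Lemma Ev_unit (L : nat) : Ev L \in unitmx.
Proof. by rewrite unitmxE det_Ev unitr1. Qed.

Lemma Od_unit (L : nat) : Od L \in unitmx.
Proof. by rewrite unitmxE det_mulmx det_tr det_Bmx mulr1 unitr1. Qed.

Lemma tr_Ev (L : nat) : (Ev L)^T = Ev L.
Proof. by rewrite /Ev trmx_mul trmxK. Qed.

Definition interleave {K L : nat} (E O : 'M[rat]_L.+1) : 'M[rat]_K.+1 :=
  \matrix_(x, y) if (x %% 2 == y %% 2)%N then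
     (if (x %% 2 == 1)%N then O (inord (x %/ 2)) (inord (y %/ 2))
      else E (inord (x %/ 2)) (inord (y %/ 2))) else 0.

Section Interleave.
Variables (K L : nat) (hKL : K.+1 = (2 * L.+1)%N).

Let inord_even (c : 'I_L.+1) : nat_of_ord (inord (2 * c) : 'I_K.+1) = (2 * c)%N.
Proof. by rewrite inordK //; have := ltn_ord c; lia. Qed.
Let inord_odd (c : 'I_L.+1) : nat_of_ord (inord (2 * c + 1) : 'I_K.+1) = (2 * c + 1)%N.
Proof. by rewrite inordK //; have := ltn_ord c; lia. Qed.
Let half_even (c : 'I_L.+1) : (inord ((2 * c) %/ 2) : 'I_L.+1) = c.
Proof. by rewrite (_ : ((2 * c) %/ 2 = c)%N) ?inord_val //; lia. Qed.
Let half_odd (c : 'I_L.+1) : (inord ((2 * c + 1) %/ 2) : 'I_L.+1) = c.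
Proof. by rewrite (_ : ((2 * c + 1) %/ 2 = c)%N) ?inord_val //; lia. Qed.

Let ilv_even_r E O (x : 'I_K.+1) (c : 'I_L.+1) :
  interleave E O x (inord (2 * c)) = if (x %% 2 == 0)%N then E (inord (x %/ 2)) c else 0.
Proof.
rewrite mxE inord_even half_even (_ : ((2 * c) %% 2 = 0)%N); last by lia.
by have [->|->] : (x %% 2 = 0 \/ x %% 2 = 1)%N by lia.
Qed.

Let ilv_even_l E O (y : 'I_K.+1) (c : 'I_L.+1) :
  interleave E O (inord (2 * c)) y = if (y %% 2 == 0)%N then E c (inord (y %/ 2)) else 0.
Proof.
rewrite mxE inord_even half_even (_ : ((2 * c) %% 2 = 0)%N); last by lia.
by have [->|->] : (y %% 2 = 0 \/ y %% 2 = 1)%N by lia.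
Qed.

Let ilv_odd_r E O (x : 'I_K.+1) (c : 'I_L.+1) :
  interleave E O x (inord (2 * c + 1)) = if (x %% 2 == 1)%N then O (inord (x %/ 2)) c else 0.
Proof.
rewrite mxE inord_odd half_odd (_ : ((2 * c + 1) %% 2 = 1)%N); last by lia.
by have [->|->] : (x %% 2 = 0 \/ x %% 2 = 1)%N by lia.
Qed.

Let ilv_odd_l E O (y : 'I_K.+1) (c : 'I_L.+1) :
  interleave E O (inord (2 * c + 1)) y = if (y %% 2 == 1)%N then O c (inord (y %/ 2)) else 0.
Proof.
rewrite mxE inord_odd half_odd (_ : ((2 * c + 1) %% 2 = 1)%N); last by lia.
by have [->|->] : (y %% 2 = 0 \/ y %% 2 = 1)%N by lia.
Qed.

Lemma interleave_mul (E O E' O' : 'M[rat]_L.+1) :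
  @interleave K L E O *m interleave E' O' = interleave (E *m E') (O *m O').
Proof.
apply/matrixP => x y; rewrite !mxE (@sum_ord_parity K L.+1 _ hKL).
under eq_bigr => c _ do rewrite ilv_even_r ilv_even_l.
under [X in _ + X]eq_bigr => c _ do rewrite ilv_odd_r ilv_odd_l.
have [] : (x %% 2 = 0 \/ x %% 2 = 1)%N by lia.
all: have [] : (y %% 2 = 0 \/ y %% 2 = 1)%N by lia.
all: move=> -> -> /=.
- by rewrite [X in _ + X]big1 ?addr0 // => c _; rewrite mulr0.
- by rewrite !big1 ?addr0 // => c _; rewrite ?mulr0 ?mul0r.
- by rewrite !big1 ?addr0 // => c _; rewrite ?mulr0 ?mul0r.
- by rewrite big1 ?add0r // => c _; rewrite ?mulr0 ?mul0r.
Qed.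

Lemma interleave1 : @interleave K L 1%:M 1%:M = 1%:M.
Proof.
apply/matrixP => x y; rewrite !mxE.
have hx := ltn_ord x; have hy := ltn_ord y.
have halves : (x %% 2 = y %% 2)%N ->
    (inord (x %/ 2) == inord (y %/ 2) :> 'I_L.+1) = (x == y).
  move=> hp; apply/eqP/eqP => [e|->//]; apply: val_inj => /=.
  by move/(congr1 val): e; rewrite /= !inordK //; lia.
have [] : (x %% 2 = 0 \/ x %% 2 = 1)%N by lia.
all: have [] : (y %% 2 = 0 \/ y %% 2 = 1)%N by lia.
all: move=> hy2 hx2; rewrite hx2 hy2 /= ?mxE.
- by rewrite halves //; lia.
- by rewrite (_ : (x == y) = false) //; apply/negbTE/negP => /eqP e; rewrite e in hx2; lia.
- by rewrite (_ : (x == y) = false) //; apply/negbTE/negP => /eqP e; rewrite e in hx2; lia.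
- by rewrite halves //; lia.
Qed.

Lemma interleave_exp (E O : 'M[rat]_L.+1) (n : nat) :
  (@interleave K L E O) ^+ n = interleave (E ^+ n) (O ^+ n).
Proof.
elim: n => [|n IH]; first by rewrite !expr0; symmetry; exact: interleave1.
by rewrite !exprS IH; exact: interleave_mul.
Qed.

Lemma interleave_even (E O : 'M[rat]_L.+1) (a b : nat) :
  (a < L.+1)%N -> (b < L.+1)%N ->
  @interleave K L E O (inord (2 * a)) (inord (2 * b)) = E (inord a) (inord b).
Proof.
move=> ha hb.
have h2a : (2 * a < K.+1)%N by lia.
have h2b : (2 * b < K.+1)%N by lia.
have [ea eb] : ((2 * a) %% 2 = 0 /\ (2 * b) %% 2 = 0)%N by lia.
have [ha' hb'] : ((2 * a) %/ 2 = a /\ (2 * b) %/ 2 = b)%N by lia.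
by rewrite mxE (inordK h2a) (inordK h2b) ea eb ha' hb'.
Qed.

(* The path graph is bipartite, so its square preserves parity. *)
Lemma Amx_sqr : Amx K *m Amx K = @interleave K L (Ev L.+1) (Od L.+1).
Proof.
apply/matrixP => x y; rewrite mxE (@sum_ord_parity K L.+1 _ hKL).
under eq_bigr => c _ do rewrite !mxE inord_even.
under [X in _ + X]eq_bigr => c _ do rewrite !mxE inord_odd.
have hx := ltn_ord x; have hy := ltn_ord y.
have [hx2 hy2] : (x %/ 2 < L.+1 /\ y %/ 2 < L.+1)%N by lia.
rewrite mxE; have [] : (x %% 2 = 0 \/ x %% 2 = 1)%N by lia.
all: have [] : (y %% 2 = 0 \/ y %% 2 = 1)%N by lia.
all: move=> ey ex; rewrite ex ey /= ?mxE.
- rewrite big1 ?add0r => [|c _]; last by rewrite [adjn x _]adjn_par ?mul0r //; lia.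
  apply: eq_bigr => c _; rewrite !mxE !inordK //.
  have [-> ->] : (2 * (x %/ 2) = x /\ 2 * (y %/ 2) = y)%N by lia.
  by rewrite (adjnC _ y).
- rewrite !big1 ?addr0 // => c _; first by rewrite [adjn _ y]adjn_par ?mulr0 //; lia.
  by rewrite [adjn x _]adjn_par ?mul0r //; lia.
- rewrite !big1 ?addr0 // => c _; first by rewrite [adjn x _]adjn_par ?mul0r //; lia.
  by rewrite [adjn _ y]adjn_par ?mulr0 //; lia.
- rewrite [X in _ + X]big1 ?addr0 => [|c _]; last by rewrite [adjn x _]adjn_par ?mul0r //; lia.
  apply: eq_bigr => c _; rewrite !mxE !inordK //.
  have [-> ->] : (2 * (x %/ 2) + 1 = x /\ 2 * (y %/ 2) + 1 = y)%N by lia.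
  by rewrite (adjnC x).
Qed.

Lemma Amx_sqr_inv :
  Amx K *m Amx K *m @interleave K L (invmx (Ev L.+1)) (invmx (Od L.+1)) = 1%:M.
Proof.
by rewrite Amx_sqr interleave_mul (mulmxV (Ev_unit _)) (mulmxV (Od_unit _)) interleave1.
Qed.

Lemma Amx_unit : Amx K \in unitmx.
Proof. by case/mulmx1_unit: Amx_sqr_inv; rewrite unitmx_mul => /andP[]. Qed.

Lemma invAmx_sqr :
  invmx (Amx K) *m invmx (Amx K) = @interleave K L (invmx (Ev L.+1)) (invmx (Od L.+1)).
Proof.
rewrite -[LHS]mulmx1 -Amx_sqr_inv !mulmxA.
rewrite -(mulmxA (invmx (Amx K)) (invmx (Amx K)) (Amx K)) (mulVmx Amx_unit).
by rewrite mulmx1 (mulVmx Amx_unit) mul1mx.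
Qed.

Lemma Amx_pow_even (n a b : nat) : (a < L.+1)%N -> (b < L.+1)%N ->
  (Amx K ^+ (2 * n)) (inord (2 * a)) (inord (2 * b)) = (Ev L.+1 ^+ n) (inord a) (inord b).
Proof.
move=> ha hb; rewrite exprM expr2 (_ : Amx K * Amx K = Amx K *m Amx K) // Amx_sqr.
by rewrite interleave_exp interleave_even.
Qed.

Lemma invAmx_pow_even (n a b : nat) : (a < L.+1)%N -> (b < L.+1)%N ->
  (invmx (Amx K) ^+ (2 * n)) (inord (2 * a)) (inord (2 * b)) =
  (invmx (Ev L.+1) ^+ n) (inord a) (inord b).
Proof.
move=> ha hb.
rewrite exprM expr2 (_ : invmx (Amx K) * _ = invmx (Amx K) *m invmx (Amx K)) //.
rewrite invAmx_sqr.
by rewrite interleave_exp interleave_even.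
Qed.

End Interleave.

(* The inverse of an invertible matrix is a polynomial in it
   (by the Cayley-Hamilton theorem). *)
Lemma invmx_horner (F : fieldType) (n : nat) (A : 'M[F]_n.+1) :
  A \in unitmx -> exists g, invmx A = horner_mx A g.
Proof.
move=> Au; set chi := char_poly A.
have chi0 : chi`_0 != 0.
  by rewrite /chi char_poly_det mulf_eq0 negb_or signr_eq0 -unitfE -unitmxE.
have low : take_poly 1 chi = (chi`_0)%:P.
  by apply/polyP => i; rewrite coef_take_poly coefC; case: i.
have high : horner_mx A (drop_poly 1 chi) * A = - (chi`_0)%:M.
  move: (Cayley_Hamilton A); rewrite -/chi -{1}(poly_take_drop 1 chi) low.
  rewrite rmorphD rmorphM /= horner_mx_C expr1 horner_mx_X => /eqP.
  by rewrite addr_eq0 => /eqP ->; rewrite opprK.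
exists (- (chi`_0)^-1 *: drop_poly 1 chi); rewrite linearZ /=.
have inv_left : (- (chi`_0)^-1 *: horner_mx A (drop_poly 1 chi)) * A = 1.
  by rewrite -scalerAl high scaleNr scalerN opprK scale_scalar_mx mulVf.
have AY : A * invmx A = 1 by exact: mulmxV.
by rewrite -[LHS]mul1r -inv_left -mulrA AY mulr1.
Qed.

Lemma entry_horner_eq0 (R : comNzRingType) (n : nat) (A Z : 'M[R]_n.+1) (x y : 'I_n.+1) :
  (forall t, (Z * A ^+ t) x y = 0) -> forall h, (Z * horner_mx A h) x y = 0.
Proof.
move=> Z_pow h; suff gen t : (Z * horner_mx A h * A ^+ t) x y = 0.
  by have := gen 0%N; rewrite expr0 mulr1.
elim/poly_ind: h t => [|h c IH] t; first by rewrite rmorph0 mulr0 mul0r mxE.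
rewrite rmorphD rmorphM /= horner_mx_X horner_mx_C mulrDr mulrDl mxE.
rewrite mulrA -(mulrA _ A) -exprS IH add0r -[Z * _]/(Z *m _) mul_mx_scalar.
by rewrite -scalerAl mxE Z_pow mulr0.
Qed.

Lemma sum_ord_trunc (n m : nat) (F : nat -> rat) : (m <= n)%N ->
  (forall i, (m <= i < n)%N -> F i = 0) ->
  \sum_(i < n) F i = \sum_(i < m) F i.
Proof.
move=> mn F0; rewrite (big_ord_widen n F mn) [RHS]big_mkcond /=.
by apply: eq_bigr => i _; case: ltnP => // mi; rewrite F0 // mi ltn_ord.
Qed.

Lemma conv_unique (c E1 E2 r : nat -> rat) :
  c 0%N != 0 -> E1 0%N = 0 -> E2 0%N = 0 ->
  (forall N, \sum_(i < N.+1) c i * E1 (N - i)%N = r N) ->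
  (forall N, \sum_(i < N.+1) c i * E2 (N - i)%N = r N) -> E1 =1 E2.
Proof.
move=> c0 E10 E20 conv1 conv2; elim/ltn_ind => -[_|N IH]; first by rewrite E10 E20.
have := conv1 N.+1; rewrite -(conv2 N.+1) big_ord_recl [X in _ = X]big_ord_recl subn0.
rewrite (eq_bigr (fun i : 'I_N.+1 => c (lift ord0 i) * E2 (N.+1 - lift ord0 i)%N)).
  by move/addIr/(mulfI c0).
by move=> i _; rewrite IH // lift0 subSS; have := ltn_ord i; lia.
Qed.

(* Let A be an invertible matrix and p/q the generating function of the
   entries (A^N)_{xy}, N >= 0, with deg p < deg q = d.  The coefficients
   D N (N >= 1) of -P/Q, where P and Q are the degree-d reversals of p and
   q, are the entries of the negative powers: D N = (A^-N)_{xy}. *)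
Section NegativePowers.
Variables (n : nat) (A : 'M[rat]_n.+1) (x y : 'I_n.+1) (p q : {poly rat}) (d : nat).
Hypotheses (A_unit : A \in unitmx) (size_q : size q = d.+1) (size_p : (size p <= d)%N).
Hypothesis gf_pq : forall N, \sum_(i < N.+1) q`_i * (A ^+ (N - i)) x y = p`_N.

Local Notation Y := (invmx A).

Let q_high i : (d < i)%N -> q`_i = 0.
Proof. by move=> di; rewrite nth_default // size_q. Qed.
Let p_high i : (d <= i)%N -> p`_i = 0.
Proof. by move=> di; rewrite nth_default // (leq_trans size_p di). Qed.
Let revc_high (s : {poly rat}) i : (d < i)%N -> revc s d i = 0.
Proof. by rewrite /revc ltnNge => /negbTE ->. Qed.

Let AY : A * Y = 1. Proof. exact: mulmxV. Qed.
Let AY_pow N : A ^+ N * Y ^+ N = 1.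
Proof.
elim: N => [|N IH]; first by rewrite !expr0 mulr1.
by rewrite exprSr exprS -mulrA (mulrA A Y) AY mul1r IH.
Qed.

Let AY_powl i j : A ^+ i * Y ^+ (i + j) = Y ^+ j.
Proof. by rewrite exprD mulrA AY_pow mul1r. Qed.
Let AY_powr i j : A ^+ (i + j) * Y ^+ i = A ^+ j.
Proof. by rewrite addnC exprD -mulrA AY_pow mulr1. Qed.

(* Q(A), where Q is the reversal of q: it annihilates the entry (x, y)
   of every power of A, since deg p < deg q. *)
Let Z := \sum_(i < d.+1) revc q d i *: A ^+ i.

Let Z_pow t : (Z * A ^+ t) x y = 0.
Proof.
rewrite mulr_suml summxE.
transitivity (\sum_(i < (d + t).+1) q`_i * (A ^+ (d + t - i)) x y); last first.
  by rewrite gf_pq p_high // leq_addr.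
rewrite [RHS](@sum_ord_trunc _ d.+1 (fun i => q`_i * (A ^+ (d + t - i)) x y)).
- rewrite (reindex_inj rev_ord_inj) /=; apply: eq_bigr => i _.
  have id : (i <= d)%N by rewrite -ltnS.
  rewrite -scalerAl -exprD mxE /revc subSS leq_subr subKn //.
  by rewrite addnBAC.
- by rewrite ltnS leq_addr.
- by move=> i /andP[di _]; rewrite q_high ?mul0r.
Qed.

Let Z_invpow N : (Z * Y ^+ N) x y = 0.
Proof.
have [g ->] := @invmx_horner _ _ A A_unit; rewrite -rmorphXn.
by apply: entry_horner_eq0; exact: Z_pow.
Qed.

Let revc_tail N : \sum_(j < d.+1) revc q d (N + j) * (A ^+ j) x y = revc p d N.
Proof.
have [Nd|dN] := leqP N d; last first.
  by rewrite revc_high // big1 // => j _; rewrite revc_high ?mul0r //; lia.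
rewrite {2}/revc Nd -gf_pq.
rewrite (@sum_ord_trunc d.+1 (d - N).+1 (fun j => revc q d (N + j) * (A ^+ j) x y)).
- rewrite (reindex_inj rev_ord_inj) /=; apply: eq_bigr => j _.
  have jd := ltn_ord j; rewrite /revc ifT; last by lia.
  by congr (q`_ _ * (A ^+ _) x y); lia.
- by rewrite ltnS leq_subr.
- by move=> j /andP[jd _]; rewrite revc_high ?mul0r //; lia.
Qed.

Let Z_invpow_split N :
  (Z * Y ^+ N) x y = \sum_(i < N.+1) revc q d i *
    (if (N - i)%N is 0 then 0 else (Y ^+ (N - i)) x y) + revc p d N.
Proof.
rewrite mulr_suml summxE; under eq_bigr => i _ do rewrite -scalerAl mxE.
rewrite -(@sum_ord_trunc (N + d.+1) d.+1 (fun i => revc q d i * (A ^+ i * Y ^+ N) x y)).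
- rewrite big_split_ord /= -revc_tail; congr (_ + _).
    rewrite big_ord_recr /= subnn mulr0 addr0; apply: eq_bigr => i _.
    have iN := ltn_ord i.
    rewrite -[X in Y ^+ X](subnKC (ltnW iN)) AY_powl.
    by case: (N - i)%N (subn_gt0 i N) => [|k]; rewrite iN.
  by apply: eq_bigr => j _; rewrite AY_powr.
- by rewrite leq_addl.
- by move=> i /andP[di _]; rewrite revc_high ?mul0r.
Qed.

Lemma neg_coef_invpow (D : nat -> rat) :
  (forall N, \sum_(i < N.+1) revc q d i *
     (if (N - i)%N is 0 then 0 else D (N - i)%N) = - revc p d N) ->
  forall N, (0 < N)%N -> D N = (Y ^+ N) x y.
Proof.
move=> convD N N0.
have lead : revc q d 0 != 0.
  have -> : revc q d 0 = lead_coef q by rewrite lead_coefE size_q /revc subn0.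
  by rewrite lead_coef_eq0 -size_poly_eq0 size_q.
have convY M : \sum_(i < M.+1) revc q d i *
    (if (M - i)%N is 0 then 0 else (Y ^+ (M - i)) x y) = - revc p d M.
  by apply/eqP; rewrite -addr_eq0 -Z_invpow_split Z_invpow.
have := conv_unique (revc q d) (fun j => if j is 0 then 0 else D j)
  (fun j => if j is 0 then 0 else (Y ^+ j) x y) (fun M => - revc p d M)
  lead (erefl _) (erefl _) convD convY N.
by case: N N0.
Qed.

End NegativePowers.

Lemma jacobi (F : fieldType) (k m : nat) (X Y : 'M[F]_(k + m)) (s t : 'S_(k + m)) :
  X *m Y = 1%:M ->
  \det (\matrix_(i, j) X (s (lshift m i)) (t (lshift m j))) =
  (-1) ^+ s * (-1) ^+ t * \det X *
  \det (\matrix_(i, j) Y (t (rshift k i)) (s (rshift k j))).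
Proof.
move=> XY; set Z := col_perm t (row_perm s X); set W := row_perm t (col_perm s Y).
have ZW : Z *m W = 1%:M.
  rewrite /Z /W col_permE row_permE row_permE col_permE !mulmxA.
  rewrite -(mulmxA _ (perm_mx t^-1)) -perm_mxM mulVg perm_mx1 mulmx1.
  by rewrite -(mulmxA _ X) XY mulmx1 -perm_mxM mulgV perm_mx1.
have detZ : \det Z = (-1) ^+ s * (-1) ^+ t * \det X.
  by rewrite /Z col_permE row_permE !det_mulmx !det_perm odd_permV mulrAC.
have e := ZW; rewrite -(submxK Z) -(submxK W) mulmx_block (scalar_mx_block k m 1) in e.
case/eq_block_mx: e => _ ZW_ur _ ZW_dr.
(* Z times an upper block-triangular matrix is lower block-triangular. *)
have tri : Z *m block_mx 1%:M (ursubmx W) 0 (drsubmx W) =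
           block_mx (ulsubmx Z) 0 (dlsubmx Z) 1%:M.
  by rewrite -{1}(submxK Z) mulmx_block !mulmx1 !mulmx0 !addr0 ZW_ur ZW_dr.
have Zul : ulsubmx Z = \matrix_(i, j) X (s (lshift m i)) (t (lshift m j)).
  by apply/matrixP => i j; rewrite !mxE.
have Wdr : drsubmx W = \matrix_(i, j) Y (t (rshift k i)) (s (rshift k j)).
  by apply/matrixP => i j; rewrite !mxE.
have := congr1 determinant tri.
by rewrite det_mulmx det_ublock det_lblock Zul Wdr detZ !det1 mulr1 mul1r => <-.
Qed.

Lemma incr_gap (n : nat) (g : 'I_n -> nat) :
  (forall i j : 'I_n, (i < j)%N -> (g i < g j)%N) ->
  forall i j : 'I_n, (i <= j)%N -> (g i + (j - i) <= g j)%N.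
Proof.
move=> g_incr i j ij; suff gap d (l : 'I_n) : (i + d)%N = l -> (g i + d <= g l)%N.
  by apply: gap; lia.
elim: d l => [|d IH] l il; first by rewrite addn0 (_ : i = l) //; apply: val_inj; rewrite /= -il addn0.
have lp : (l.-1 < n)%N by have := ltn_ord l; lia.
have := IH (Ordinal lp) ltac:(rewrite /=; lia).
have := g_incr (Ordinal lp) l ltac:(rewrite /=; lia).
lia.
Qed.

Section Shuffle.
Local Open Scope nat_scope.
Variables k m : nat.

Definition shuffle (s : 'S_(k + m)) : Prop :=
  (forall i j : 'I_k, i < j -> s (lshift m i) < s (lshift m j)) /\
  (forall i j : 'I_m, i < j -> s (rshift k i) < s (rshift k j)).

Definition displacement (s : 'S_(k + m)) : nat := \sum_(i < k) (s (lshift m i) - i).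

Lemma shuffle_left_ge {s : 'S_(k + m)} : shuffle s -> forall i : 'I_k, i <= s (lshift m i).
Proof.
move=> [sl _] i; have k0 : 0 < k by have := ltn_ord i; lia.
have := @incr_gap k (fun j => nat_of_ord (s (lshift m j))) sl (Ordinal k0) i (leq0n _).
rewrite /=; lia.
Qed.

Lemma shuffle_id {s : 'S_(k + m)} : shuffle s ->
  (forall i : 'I_k, s (lshift m i) = i :> nat) -> s = 1%g.
Proof.
move=> [sl sr] fixl.
have right_ge (r : 'I_m) : k <= s (rshift k r).
  rewrite leqNgt; apply/negP => rk.
  have /perm_inj/(congr1 val) : s (lshift m (Ordinal rk)) = s (rshift k r).
    by apply: val_inj; rewrite /= fixl.
  by rewrite /=; lia.
have fixr (r : 'I_m) : s (rshift k r) = k + r :> nat.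
  have m0 : 0 < m by have := ltn_ord r; lia.
  have m1 : m.-1 < m by lia.
  have := @incr_gap m (fun j => nat_of_ord (s (rshift k j))) sr (Ordinal m0) r (leq0n _).
  have := @incr_gap m (fun j => nat_of_ord (s (rshift k j))) sr r (Ordinal m1)
    ltac:(rewrite /=; have := ltn_ord r; lia).
  have := right_ge (Ordinal m0); have := ltn_ord (s (rshift k (Ordinal m1))).
  rewrite /=; have := ltn_ord r; lia.
apply/permP => x; rewrite perm1; case: (splitP x) => [j xj|r xr].
  have -> : x = lshift m j by apply: val_inj.
  by apply: val_inj; rewrite /= fixl.
have -> : x = rshift k r by apply: val_inj.
by apply: val_inj; rewrite /= fixr.
Qed.

(* Let i be the first point of the first block moved by a shuffle s, and
   v = s i > i.  Then v - 1 is the image of a point of the second block,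
   and exchanging the values v - 1 and v gives a shuffle of displacement
   one less. *)
Section Descent.
Variables (s : 'S_(k + m)) (i : 'I_k).
Hypotheses (sh : shuffle s) (moved : s (lshift m i) != i :> nat)
  (fixed : forall j : 'I_k, j < i -> s (lshift m j) = j :> nat).

Let v := s (lshift m i).
Let iv : i < v.
Proof. by rewrite ltn_neqAle eq_sym moved (shuffle_left_ge sh). Qed.
Let vp : v.-1 < k + m.
Proof. by have := ltn_ord v; lia. Qed.
Let u : 'I_(k + m) := Ordinal vp.
Let uv : u != v.
Proof. by apply/eqP => /(congr1 val) /=; have := iv; lia. Qed.

Let left_ne_u (j : 'I_k) : s (lshift m j) != u.
Proof.
case: sh => sl _; apply/eqP => /(congr1 val) /= e.
have [ji|ij|/val_inj ji] := ltngtP j i.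
- by have := fixed j ji; have := iv; lia.
- by have := sl i j ij; rewrite -/v; lia.
- by move: e; rewrite ji -/v; have := iv; lia.
Qed.

Let right_ne_v (r : 'I_m) : s (rshift k r) != v.
Proof.
apply/eqP => /perm_inj/(congr1 val) /=; have := ltn_ord i; lia.
Qed.

Let s' := (s * tperm u v)%g.
Let s'E x : s' x = tperm u v (s x).
Proof. by rewrite permM. Qed.
Let s'_i : s' (lshift m i) = u.
Proof. by rewrite s'E tpermR. Qed.
Let s'_left (j : 'I_k) : j != i -> s' (lshift m j) = s (lshift m j).
Proof.
move=> ji; rewrite s'E tpermD // 1?eq_sym ?left_ne_u //.
by apply: contra ji => /eqP/perm_inj/lshift_inj ->.
Qed.

Let s'_right (r : 'I_m) :
  s' (rshift k r) = (if s (rshift k r) == u then v else s (rshift k r)) :> nat.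
Proof.
rewrite s'E; case: eqP => [->|/eqP ru]; first by rewrite tpermL.
by rewrite tpermD // eq_sym ?right_ne_v.
Qed.

Let descent_shuffle : shuffle s'.
Proof.
case: sh => sl sr; split=> [a b ab | a b ab].
- have [ai|ai] := eqVneq a i; have [bi|bi] := eqVneq b i.
  + by move: ab; rewrite ai bi ltnn.
  + by have := sl a b ab; rewrite ai s'_i s'_left // -/v /u /=; lia.
  + rewrite bi s'_i s'_left // fixed; last by rewrite -bi.
    by rewrite /u /=; have := iv; move: ab; rewrite bi; lia.
  + by rewrite !s'_left //; exact: sl.
- have := sr a b ab; rewrite !s'_right.
  have := right_ne_v b; rewrite -val_eqE /= => bv.
  case: eqP => [au|_]; case: eqP => [bu|_] //.
  + by move: ab; rewrite -bu in au; move/perm_inj/rshift_inj: au => ->; rewrite ltnn.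
  + by rewrite au /u /=; lia.
  + by rewrite bu /u /=; lia.
Qed.

Let descent_displacement : (displacement s').+1 = displacement s.
Proof.
rewrite /displacement (bigD1 i) //= [in RHS](bigD1 i) //= s'_i.
rewrite (eq_bigr (fun j : 'I_k => s (lshift m j) - j)) => [|j /s'_left -> //].
by rewrite /= -/v; have := iv; lia.
Qed.

Lemma shuffle_descent : exists u v : 'I_(k + m),
  [/\ u != v, shuffle (s * tperm u v)%g & (displacement (s * tperm u v)%g).+1 = displacement s].
Proof. by exists u, v; split. Qed.

End Descent.

Lemma shuffle_odd (s : 'S_(k + m)) : shuffle s -> odd_perm s = odd (displacement s).
Proof.
move=> sh; have [d ds] : exists d, displacement s = d by eexists.
elim/ltn_ind: d s sh ds => d IH s sh ds.
case: (boolP [forall i : 'I_k, s (lshift m i) == i :> nat]) => [/forallP fixl|].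
  have -> : displacement s = 0.
    by rewrite /displacement big1 // => i _; rewrite (eqP (fixl i)) subnn.
  by rewrite (shuffle_id sh (fun i => eqP (fixl i))) odd_perm1.
case/forallPn => i0 moved0.
have [i moved minimal] := arg_minnP (P := fun i : 'I_k => s (lshift m i) != i :> nat)
  (fun i : 'I_k => nat_of_ord i) moved0.
have fixed (j : 'I_k) : j < i -> s (lshift m j) = j :> nat.
  by move=> ji; apply/eqP; apply: contraTT ji => /minimal; rewrite -leqNgt.
have [u [v [uv sh' dec]]] := shuffle_descent _ _ sh moved fixed.
rewrite -dec /= -(IH _ _ _ sh' (erefl _)); last by rewrite -ds -dec.
by rewrite odd_permM odd_tperm uv; case: odd_perm.
Qed.

Lemma sum_blocks (s : 'S_(k + m)) :
  \sum_(i < k) s (lshift m i) + \sum_(j < m) s (rshift k j) = \sum_(x : 'I_(k + m)) x.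
Proof. by rewrite [RHS](reindex_inj (@perm_inj _ s)) /= big_split_ord. Qed.

Lemma displacement_sum {s : 'S_(k + m)} : shuffle s ->
  displacement s + \sum_(i < k) (i : nat) = \sum_(i < k) s (lshift m i).
Proof.
move=> sh; rewrite -big_split /=; apply: eq_bigr => i _.
by rewrite subnK // shuffle_left_ge.
Qed.

Lemma shuffle_sign_pair (s t : 'S_(k + m)) : shuffle s -> shuffle t ->
  odd_perm s (+) odd_perm t = odd (\sum_(j < m) (s (rshift k j) + t (rshift k j))).
Proof.
move=> shs sht; rewrite !shuffle_odd // -oddD big_split /=.
have := displacement_sum shs; have := displacement_sum sht.
have := sum_blocks s; have := sum_blocks t.
set T := \sum_(x : 'I_(k + m)) (x : nat); set I := \sum_(i < k) (i : nat).
move=> bt bs dt ds.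
have even_sum : (displacement s + displacement t) +
    (\sum_(j < m) s (rshift k j) + \sum_(j < m) t (rshift k j)) = 2 * (T - I) by lia.
move: (congr1 odd even_sum); rewrite oddD oddM andFb.
by case: (odd (_ + _)); case: (odd (_ + _)).
Qed.

End Shuffle.
Arguments shuffle {k m} s.

Lemma shuffle_of (k m : nat) (f : 'I_k -> nat) (g : 'I_m -> nat) :
  (forall i, f i < k + m)%N -> (forall j, g j < k + m)%N ->
  (forall i i' : 'I_k, i < i' -> f i < f i')%N ->
  (forall j j' : 'I_m, j < j' -> g j < g j')%N ->
  (forall i j, g j != f i) ->
  exists s : 'S_(k + m), [/\ shuffle s,
    forall i, s (lshift m i) = f i :> nat & forall j, s (rshift k j) = g j :> nat].
Proof.
move=> f_lt g_lt f_incr g_incr fg.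
pose h (x : 'I_(k + m)) := match split x with inl i => f i | inr j => g j end.
have hl i : h (lshift m i) = f i by rewrite /h (unsplitK (inl _ i)).
have hr j : h (rshift k j) = g j by rewrite /h (unsplitK (inr _ j)).
have h_lt x : (h x < k + m)%N by rewrite /h; case: split.
have incr_inj n (e : 'I_n -> nat) : (forall a b : 'I_n, a < b -> e a < e b)%N -> injective e.
  move=> e_incr a b eab; have [/e_incr|/e_incr|/val_inj //] := ltngtP a b.
    by rewrite eab ltnn.
  by rewrite eab ltnn.
have h_inj : injective h.
  move=> x y; rewrite -[x]splitK -[y]splitK.
  case: (split x) => [i|j]; case: (split y) => [i'|j'] /=; rewrite ?hl ?hr.
  - by move/(incr_inj _ _ f_incr) ->.
  - by move=> e; move: (fg i j'); rewrite e eqxx.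
  - by move=> e; move: (fg i' j); rewrite e eqxx.
  - by move/(incr_inj _ _ g_incr) ->.
have [s0 s0E] : exists s0 : 'I_(k + m) -> 'I_(k + m), forall x, s0 x = h x :> nat.
  by exists (fun x => insubd x (h x)) => x; rewrite val_insubd h_lt.
have s0_inj : injective s0 by move=> x y sxy; apply: h_inj; rewrite -!s0E sxy.
exists (perm s0_inj); split; last 2 first.
- by move=> i; rewrite permE s0E hl.
- by move=> j; rewrite permE s0E hr.
by split=> a b ab; rewrite !permE !s0E ?hl ?hr; [apply: f_incr | apply: g_incr].
Qed.

Lemma neg_ext_invpow {K a b : nat} {Dab : nat -> rat} :
  Amx K \in unitmx -> (a < K.+1)%N -> (b < K.+1)%N -> neg_ext K a b Dab ->
  forall N, (0 < N)%N -> Dab N = (invmx (Amx K) ^+ N) (inord a) (inord b).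
Proof.
move=> Au aK bK [p [q [_ size_pq gf negD]]].
have size_q : size q = (size q).-1.+1 by rewrite prednK // (leq_ltn_trans _ size_pq).
have size_p : (size p <= (size q).-1)%N by rewrite -ltnS -size_q.
apply: (@neg_coef_invpow _ _ _ _ p q _ Au size_q size_p) negD.
by move=> N; rewrite -gf; apply: eq_bigr => i _; rewrite -Cpos_Amx !inordK.
Qed.

Section EvenEntries.
Variables (K L : nat) (D : nat -> nat -> nat -> rat) (x y : 'I_L.+1).
Hypothesis KL : K.+1 = (2 * L.+1)%N.

Let even_lt (z : 'I_L.+1) : (2 * z < K.+1)%N.
Proof. by rewrite KL; have := ltn_ord z; lia. Qed.

Lemma Cz_pos_even (n : nat) : Cz K D (2 * n)%N%:Z (2 * x) (2 * y) = (Ev L.+1 ^+ n) x y.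
Proof.
rewrite /Cz -(inordK (even_lt x)) -(inordK (even_lt y)) Cpos_Amx.
by rewrite (Amx_pow_even _ _ KL) // !inord_val.
Qed.

Lemma Cz_neg_even (n : nat) : (forall a b, neg_ext K a b (D a b)) ->
  Cz K D (- (2 * n)%N%:Z) (2 * x) (2 * y) = (invmx (Ev L.+1) ^+ n) x y.
Proof.
move=> negD; case: n => [|n'].
  by have := Cz_pos_even 0; rewrite !expr0.
have Au := Amx_unit _ _ KL.
rewrite (_ : - (2 * n'.+1)%N%:Z = Negz (2 * n'.+1).-1); last by rewrite NegzE prednK.
rewrite /Cz prednK // (neg_ext_invpow Au (even_lt x) (even_lt y) (negD _ _)) //.
by rewrite (invAmx_pow_even _ _ KL) // !inord_val.
Qed.

End EvenEntries.

Lemma trmx_exp (F : fieldType) (n e : nat) (A : 'M[F]_n) : (A ^+ e)^T = A^T ^+ e.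
Proof.
elim: e => [|e IH]; first by rewrite !expr0 trmx1.
by rewrite exprS [in RHS]exprSr -IH; exact: trmx_mul.
Qed.

Lemma det_exp (F : fieldType) (n e : nat) (A : 'M[F]_n) : \det (A ^+ e) = \det A ^+ e.
Proof.
elim: e => [|e IH]; first by rewrite !expr0 det1.
by rewrite !exprS -IH; exact: det_mulmx.
Qed.

Lemma complementary_minors (F : fieldType) (k m n : nat) (M : 'M[F]_(k + m))
    (s t : 'S_(k + m)) :
  M \in unitmx -> \det M = 1 -> M^T = M ->
  \det (\matrix_(i, j) (M ^+ n) (s (lshift m i)) (t (lshift m j))) =
  (-1) ^+ s * (-1) ^+ t *
  \det (\matrix_(i, j) (invmx M ^+ n) (s (rshift k i)) (t (rshift k j))).
Proof.
move=> Mu detM Msym.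
have pow_inv : M ^+ n *m invmx M ^+ n = 1%:M.
  elim: n => [|n IH]; first by rewrite !expr0 mulmx1.
  by rewrite exprSr exprS -mulmxA (mulmxA M) (mulmxV Mu) mul1mx IH.
rewrite (jacobi _ _ _ _ _ s t pow_inv) det_exp detM expr1n mulr1 -det_tr; congr (_ * \det _).
apply/matrixP => i j; rewrite !mxE.
by rewrite -[in RHS](trmxK M) Msym -trmx_inv -trmx_exp mxE.
Qed.

Lemma positions_shuffle {k m : nat} {r : 'I_k -> nat} {rb : 'I_m -> nat} :
  (forall i, 1 <= r i <= k + m)%N -> (forall j, 1 <= rb j <= k + m)%N ->
  (forall i i' : 'I_k, i < i' -> r i < r i')%N ->
  (forall j j' : 'I_m, j < j' -> rb j < rb j')%N ->
  (forall j i, rb j != r i) ->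
  exists s : 'S_(k + m), [/\ shuffle s,
    forall i, s (lshift m i) = (r i - 1)%N :> nat &
    forall j, s (rshift k j) = (rb j - 1)%N :> nat].
Proof.
move=> r_range rb_range r_incr rb_incr r_rb.
apply: shuffle_of => [i|j|i i' ii'|j j' jj'|i j].
- by have := r_range i; lia.
- by have := rb_range j; lia.
- by have := r_incr i i' ii'; have := r_range i; lia.
- by have := rb_incr j j' jj'; have := rb_range j; lia.
- have := r_rb j i; have := r_range i; have := rb_range j.
  by move=> /andP[? _] /andP[? _] /eqP ?; apply/eqP; lia.
Qed.

Lemma positions_sign (R : nzRingType) (k m : nat) (rb sb : 'I_m -> nat) (s t : 'S_(k + m)) :
  shuffle s -> shuffle t -> (forall j, 1 <= rb j)%N -> (forall j, 1 <= sb j)%N ->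
  (forall j, s (rshift k j) = (rb j - 1)%N :> nat) ->
  (forall j, t (rshift k j) = (sb j - 1)%N :> nat) ->
  (-1) ^+ s * (-1) ^+ t = (-1) ^+ (\sum_(j < m) (rb j + sb j))%N :> R.
Proof.
move=> shs sht rb1 sb1 s_r t_r.
rewrite -signr_addb shuffle_sign_pair // signr_odd.
have -> : (\sum_(j < m) (rb j + sb j) =
           \sum_(j < m) (s (rshift k j) + t (rshift k j)) + 2 * m)%N.
  rewrite (eq_bigr (fun j => s (rshift k j) + t (rshift k j) + 2)%N); last first.
    by move=> j _; rewrite s_r t_r; have := rb1 j; have := sb1 j; lia.
  by rewrite big_split /= sum_nat_const card_ord mulnC.
by rewrite -[in RHS]signr_odd oddD oddM andFb addbF signr_odd.
Qed.

Theorem theorem21 (n k m : nat) (hk : (1 <= k)%N) (hm : (1 <= m)%N)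
  (r s : 'I_k -> nat) (rb sb : 'I_m -> nat)
  (D : nat -> nat -> nat -> rat) :
  (forall i : 'I_k, (1 <= r i <= k + m)%N) ->
  (forall i : 'I_k, (1 <= s i <= k + m)%N) ->
  (forall i j : 'I_k, (i < j)%N -> (r i < r j)%N) ->
  (forall i j : 'I_k, (i < j)%N -> (s i < s j)%N) ->
  (forall i : 'I_m, (1 <= rb i <= k + m)%N) ->
  (forall i : 'I_m, (1 <= sb i <= k + m)%N) ->
  (forall i j : 'I_m, (i < j)%N -> (rb i < rb j)%N) ->
  (forall i j : 'I_m, (i < j)%N -> (sb i < sb j)%N) ->
  (forall (i : 'I_m) (j : 'I_k), rb i != r j) ->
  (forall (i : 'I_m) (j : 'I_k), sb i != s j) ->
  (forall a b : nat, neg_ext (2 * k + 2 * m - 1) a b (D a b)) ->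
  \det (\matrix_(i < k, j < k)
          Cz (2 * k + 2 * m - 1) D (2 * n)%N%:Z (2 * r i - 2) (2 * s j - 2))
  = (-1) ^+ (\sum_(i < m) (rb i + sb i))%N *
    \det (\matrix_(i < m, j < m)
          Cz (2 * k + 2 * m - 1) D (- (2 * n)%N%:Z) (2 * rb i - 2) (2 * sb j - 2)).
Proof.
case: k hk r s => [//|k] _ r s r_range s_range r_incr s_incr rb_range sb_range
  rb_incr sb_incr r_rb s_sb negD.
have KL : (2 * k.+1 + 2 * m - 1).+1 = (2 * (k + m).+1)%N by lia.
have twice (z : 'I_(k.+1 + m)) a : z = (a - 1)%N :> nat -> (1 <= a <= k.+1 + m)%N ->
    (2 * a - 2 = 2 * z)%N.
  by move=> -> /andP[]; lia.
have [sg [sh_s sg_l sg_r]] := positions_shuffle r_range rb_range r_incr rb_incr r_rb.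
have [tg [sh_t tg_l tg_r]] := positions_shuffle s_range sb_range s_incr sb_incr s_sb.
rewrite (_ : \matrix_(i, j) _ =
  \matrix_(i, j) (Ev (k + m).+1 ^+ n) (sg (lshift m i)) (tg (lshift m j))); last first.
  apply/matrixP => i j; rewrite !mxE (twice _ _ (sg_l i)) ?(twice _ _ (tg_l j)) //.
  exact: Cz_pos_even.
rewrite (_ : \matrix_(i, j) _ =
  \matrix_(i, j) (invmx (Ev (k + m).+1) ^+ n) (sg (rshift k.+1 i)) (tg (rshift k.+1 j))); last first.
  apply/matrixP => i j; rewrite !mxE (twice _ _ (sg_r i)) ?(twice _ _ (tg_r j)) //.
  exact: Cz_neg_even.
rewrite complementary_minors ?Ev_unit ?det_Ev ?tr_Ev //; congr (_ * _).
apply: positions_sign => // j; [by case/andP: (rb_range j) | by case/andP: (sb_range j)].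
Qed.
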